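(* Suppose that $n\ge 6$ is even and that $H$ is a $3$-uniform hypergraph on $n$ vertices. If for every vertex $v$ of $H$ the hypergraph $H\setminus v$ is isomorphic to $B_{n-1}$, then $H\cong B_n$.
   Context: $H\setminus v$ is obtained by deleting $v$ and all edges containing it. For $m\ge 1$, $B_m$ is the $3$-uniform hypergraph on $m$ vertices with a partition $V=X\cup Y$ into disjoint sets with $||X|-|Y||\le 1$ whose edges are exactly the triples meeting both $X$ and $Y$. *)

From mathcomp Require Import all_boot.
Set Implicit Arguments. Unset Strict Implicit. Unset Printing Implicit Defensive.

Definition uniform3 (T : finType) (E : {set {set T}}) : Prop :=
  forall e, e \in E -> #|e| = 3.

Definition hiso (T1 T2 : finType) (E1 : {set {set T1}}) (E2 : {set {set T2}}) : Prop :=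
  exists f : T1 -> T2, bijective f /\ forall e : {set T1}, (e \in E1) = (f @: e \in E2).

Definition vdel_type (T : finType) (v : T) : finType := {x : T | x != v}.

Definition hdel (T : finType) (E : {set {set T}}) (v : T) : {set {set vdel_type v}} :=
  [set e : {set vdel_type v} | [set val x | x in e] \in E].

(* B_m on vertex set 'I_m, with X = {i < m/2} and Y its complement
   (so ||X| - |Y|| <= 1); edges are triples meeting both X and Y. *)
Definition B_X (m : nat) : {set 'I_m} := [set i : 'I_m | i < m./2].

Definition B (m : nat) : {set {set 'I_m}} :=
  [set e : {set 'I_m} | [&& #|e| == 3, e :&: B_X m != set0 & e :\: B_X m != set0]].

From mathcomp Require Import all_boot zify.

(* Deleting a vertex w from H leaves a copy of B_(n-1): there is a part P w,
   with w outside it and #|P w| = k - 1 where n = 2k, such that a triple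
   avoiding w is an edge iff it crosses P w.  Fix v and A := P v.  The k
   vertices outside v |: A span no edge; each such triple avoids every a in A,
   so P a crosses none of them, and since #|P a| < k this forces P a to miss
   them all; by counting, P a = v |: (A :\ a).  Hence v |: p is an edge iff
   the pair p is not inside A (the pair p = A, possible only for k = 3, is
   settled by deleting a vertex outside v |: A).  So H is the set of triples
   crossing v |: A, a set of size k. *)

Set Implicit Arguments.
Unset Strict Implicit.
Unset Printing Implicit Defensive.

Section Crossing.
Variable T : finType.
Implicit Types (X e : {set T}) (x y : T).

Definition crosses (X e : {set T}) : bool := (e :&: X != set0) && (e :\: X != set0).

Definition crossing_triples (X : {set T}) : {set {set T}} :=
  [set e : {set T} | (#|e| == 3) && crosses X e].

Lemma crossesE X e : crosses X e = ~~ (e \subset ~: X) && ~~ (e \subset X).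
Proof. by rewrite /crosses setI_eq0 disjoints_subset setD_eq0. Qed.

Lemma mem_crossing_triples X e :
  (e \in crossing_triples X) = (#|e| == 3) && crosses X e.
Proof. by rewrite inE. Qed.

Lemma crosses_witness X e x y :
  x \in e -> y \in e -> x \in X -> y \notin X -> crosses X e.
Proof.
move=> xe ye xX yX; apply/andP; split; apply/set0Pn; first by exists x; rewrite inE xe.
by exists y; rewrite inE ye yX.
Qed.

Lemma crosses_setU1 X e x :
  x \notin e -> crosses (x |: X) (x |: e) = ~~ (e \subset X).
Proof.
move=> xe; rewrite crossesE !subUset !sub1set !inE eqxx /=; congr (~~ _).
apply/subsetP/subsetP => sub y ye; last by rewrite inE sub ?orbT.
have := sub y ye; rewrite !inE => /orP [/eqP yx | //].
by move: ye; rewrite yx (negbTE xe).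
Qed.

Lemma crosses_setU1_notin X e x : x \notin e -> crosses (x |: X) e = crosses X e.
Proof.
move=> xe; rewrite /crosses.
have -> : e :&: (x |: X) = e :&: X.
  by apply/setP => y; rewrite !inE; have [->|] := eqVneq y x; rewrite ?(negbTE xe) ?andbF.
have -> // : e :\: (x |: X) = e :\: X.
by apply/setP => y; rewrite !inE; have [->|] := eqVneq y x; rewrite ?(negbTE xe) ?andbF.
Qed.

End Crossing.

Lemma crosses_preimset (aT rT : finType) (f : aT -> rT) (Y : {set rT}) (e : {set aT}) :
  crosses (f @^-1: Y) e = crosses Y (f @: e).
Proof. by rewrite !crossesE !sub_imset_pre preimsetC. Qed.

Lemma B_crossing m : B m = crossing_triples (B_X m).
Proof. by []. Qed.

Lemma card_B_X m : #|B_X m| = m./2.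
Proof.
have half_le : m./2 <= m by rewrite -{2}(odd_double_half m) -addnn; lia.
have -> : B_X m = [set widen_ord half_le i | i in 'I_(m./2)].
  apply/setP => i; rewrite inE; apply/idP/imsetP => [lt_i | [j _ ->]].
    by exists (Ordinal lt_i) => //; apply: val_inj.
  exact: (ltn_ord j).
rewrite card_imset ?card_ord //.
by move=> i j /(congr1 val) /= /ord_inj.
Qed.

Lemma bij_preimset_eq (T : finType) (X Y : {set T}) :
  #|X| = #|Y| -> exists2 f : T -> T, bijective f & f @^-1: Y = X.
Proof.
move=> eq_XY; pose s := enum X ++ enum (~: X); pose t := enum Y ++ enum (~: Y).
have size_st : size s = size t by rewrite !size_cat -!cardE !cardsC.
have mem_s x : x \in s by rewrite mem_cat !mem_enum inE orbN.
have uniq_t : uniq t.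
  rewrite cat_uniq !enum_uniq andbT /=; apply/hasPn => y.
  by rewrite !mem_enum inE.
pose f x := nth x t (index x s).
have idx_lt x : index x s < size t by rewrite -size_st index_mem mem_s.
have f_inj : injective f.
  move=> x y; rewrite /f (set_nth_default y x (idx_lt x)) => /eqP.
  rewrite nth_uniq // => /eqP eq_idx.
  by rewrite -(nth_index x (mem_s x)) eq_idx nth_index.
exists f; first exact: injF_bij.
have size_XY : size (enum X) = size (enum Y) by rewrite -!cardE eq_XY.
have size_CXY : size (enum (~: X)) = size (enum (~: Y)).
  by move: size_st; rewrite !size_cat size_XY => /addnI.
apply/setP => x; rewrite inE /f nth_cat index_cat !mem_enum -size_XY.
have [xX | xNX] := boolP (x \in X).
  rewrite index_mem mem_enum xX -mem_enum mem_nth //.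
  by rewrite -size_XY index_mem mem_enum.
rewrite ltnNge leq_addr /= addKn; apply/negbTE; rewrite -in_setC -mem_enum.
by rewrite mem_nth // -size_CXY index_mem mem_enum inE.
Qed.

Lemma hiso_crossing_triples (T : finType) (X Y : {set T}) :
  #|X| = #|Y| -> hiso (crossing_triples X) (crossing_triples Y).
Proof.
case/bij_preimset_eq => f f_bij <-; exists f; split=> // e.
by rewrite !mem_crossing_triples crosses_preimset card_imset //; apply: bij_inj.
Qed.

Lemma hiso_crossing_triplesP (T1 T2 : finType) (E : {set {set T1}}) (Y : {set T2}) :
  hiso E (crossing_triples Y) ->
  exists2 X : {set T1}, #|X| = #|Y| & E = crossing_triples X.
Proof.
case=> f [f_bij iso_f]; exists (f @^-1: Y); first exact/on_card_preimset/onW_bij.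
apply/setP => e; rewrite iso_f !mem_crossing_triples crosses_preimset.
by rewrite card_imset //; apply: bij_inj.
Qed.

Lemma mem_hdel_crossing (T : finType) (E : {set {set T}}) (w : T)
    (X : {set vdel_type w}) (e : {set T}) :
  hdel E w = crossing_triples X -> w \notin e -> #|e| = 3 ->
  (e \in E) = crosses (val @: X) e.
Proof.
move=> delE we e3.
have [e' e_val] : exists e' : {set vdel_type w}, e = val @: e'.
  exists (val @^-1: e); apply/setP => x; apply/idP/imsetP => [xe | [y + ->]].
    have xw : x != w by apply: contraNneq we => <-.
    by exists (exist _ x xw); rewrite ?inE.
  by rewrite inE.
have val_inj' : injective (val : vdel_type w -> T) by apply: val_inj.
have valK : val @^-1: (val @: X) = X by apply/setP => x; rewrite inE mem_imset.
have /setP/(_ e') := delE; rewrite /hdel !inE -e_val => ->.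
have card_e' : #|e'| = 3 by rewrite -e3 e_val card_imset.
by rewrite card_e' e_val -crosses_preimset valK.
Qed.

Lemma crossing_part_of_hdel (T1 T2 : finType) (E : {set {set T1}}) (w : T1)
    (Y : {set T2}) :
  hiso (hdel E w) (crossing_triples Y) ->
  exists P : {set T1}, [/\ w \notin P, #|P| = #|Y| &
    forall e : {set T1}, w \notin e -> #|e| = 3 -> (e \in E) = crosses P e].
Proof.
case/hiso_crossing_triplesP => X card_X delE.
have val_inj' : injective (val : vdel_type w -> T1) by apply: val_inj.
exists (val @: X); split; last by move=> e; apply: mem_hdel_crossing.
  by apply/imsetP => -[x _ /eqP]; rewrite eq_sym (negbTE (valP x)).
by rewrite card_imset.
Qed.

Section Reconstruction.
Variables (T : finType) (k : nat) (H : {set {set T}}) (P : T -> {set T}).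
Hypothesis card_T : #|T| = k.*2.
Hypothesis k_gt2 : 2 < k.
Hypothesis P_spec : forall w, [/\ w \notin P w, #|P w| = k.-1 &
  forall e : {set T}, w \notin e -> #|e| = 3 -> (e \in H) = crosses (P w) e].
Variable v : T.
Implicit Types (a : T) (p e : {set T}).

Local Notation A := (P v).
Local Notation C := (~: (v |: P v)).

Lemma card_setU1_part : #|v |: A| = k.
Proof.
have [vA cA _] := P_spec v.
by rewrite cardsU1 vA cA add1n prednK // (leq_trans _ k_gt2).
Qed.

Lemma card_outside : #|C| = k.
Proof. by have := cardsC (v |: A); rewrite card_setU1_part card_T; lia. Qed.

Lemma part_sub_setU1 a : a \in A -> P a \subset v |: A.
Proof.
move=> aA; have [vA _ linkv] := P_spec v; have [aPa cPa linka] := P_spec a.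
apply/subsetP => x xPa; apply/negPn/negP; rewrite -in_setC => xC.
have [y yC yPa] : exists2 y, y \in C & y \notin P a.
  by apply/subsetPn/negP => /subset_leq_card; rewrite card_outside cPa; lia.
have [z zC zxy] : exists2 z, z \in C & z \notin [set x; y].
  by apply/subsetPn/negP => /subset_leq_card; rewrite card_outside cards2; lia.
have xy : x != y by apply: contraNneq yPa => <-.
set e := z |: [set x; y].
have e_C : e \subset C by rewrite !subUset !sub1set zC xC yC.
have notin_e t : t \in v |: A -> t \notin e.
  by move=> tvA; apply/negP => /(subsetP e_C); rewrite inE tvA.
have e3 : #|e| = 3 by rewrite cardsU1 zxy cards2 xy.
have cross_a : crosses (P a) e.
  by apply: (crosses_witness _ _ xPa yPa); rewrite !inE eqxx ?orbT.
have no_cross_v : ~~ crosses A e.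
  rewrite crossesE negb_and negbK; apply/orP; left.
  by apply: subset_trans e_C _; rewrite setCS subsetU1.
by move: no_cross_v; rewrite -linkv ?linka ?cross_a ?notin_e ?setU11 ?setU1r.
Qed.

Lemma part_of_mem_part a : a \in A -> P a = v |: (A :\ a).
Proof.
move=> aA; have [vA cA _] := P_spec v; have [aPa cPa _] := P_spec a.
apply/eqP; rewrite eqEcard; apply/andP; split.
  apply/subsetP => t tPa; have := subsetP (part_sub_setU1 aA) t tPa.
  have ta : t != a by apply: contraTneq tPa => ->.
  by rewrite !inE ta.
have := cardsD1 a A; rewrite cardsU1 !inE (negbTE vA) andbF aA cPa cA /=; lia.
Qed.

Lemma mem_H_setU1_notsub p : #|p| = 2 -> v \notin p -> ~~ (A \subset p) ->
  (v |: p \in H) = ~~ (p \subset A).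
Proof.
move=> p2 vp /subsetPn [a aA ap]; have [vA _ _] := P_spec v.
have [_ _ linka] := P_spec a.
have av : a != v by apply: contraTneq aA => ->.
have avp : a \notin v |: p by rewrite !inE negb_or av.
have vp3 : #|v |: p| = 3 by rewrite cardsU1 vp p2.
by rewrite linka // part_of_mem_part // crosses_setU1 // subsetD1 ap andbT.
Qed.

Lemma setU1_part_notin_H : #|A| = 2 -> v |: A \notin H.
Proof.
move=> A2; have [vA cA linkv] := P_spec v.
have [u uC] : exists u, u \in C by apply/set0Pn; rewrite -card_gt0 card_outside; lia.
have [uPu cPu linku] := P_spec u.
set Q := ~: (u |: P u).
have cQ : #|Q| = 3 by have := cardsC (u |: P u); rewrite -/Q cardsU1 uPu cPu card_T /=; lia.
have uQ : u \notin Q by rewrite inE negbK setU11.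
have QH : Q \notin H by rewrite linku // crossesE setCS subsetU1.
have vQ : v \in Q.
  apply: contraR QH => vQ; rewrite linkv // crossesE.
  apply/andP; split; last by apply/negP => /subset_leq_card; rewrite cQ A2.
  apply/negP => QA.
  have : Q \subset C :\ u.
    apply/subsetP => t tQ; have := subsetP QA t tQ.
    have tu : t != u by apply: contraTneq tQ => ->.
    have tv : t != v by apply: contraTneq tQ => ->.
    by rewrite !inE tu (negbTE tv) => /negbTE ->.
  by move/subset_leq_card; have := cardsD1 u C; rewrite cQ uC card_outside /=; lia.
set q := Q :\ v.
have eQ : Q = v |: q by rewrite setD1K.
have cq : #|q| = 2 by have := cardsD1 v Q; rewrite -/q vQ cQ /=; lia.
have vq : v \notin q by rewrite setD11.
have qA : q = A.
  have [Aq | nAq] := boolP (A \subset q); first by apply/esym/eqP; rewrite eqEcard Aq cq A2.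
  move: QH; rewrite eQ mem_H_setU1_notsub // negbK => qA.
  by apply/eqP; rewrite eqEcard qA cq A2.
by rewrite -qA -eQ.
Qed.

Lemma mem_H_setU1 p : #|p| = 2 -> v \notin p ->
  (v |: p \in H) = ~~ (p \subset A).
Proof.
move=> p2 vp; have [Ap | nAp] := boolP (A \subset p); last exact: mem_H_setU1_notsub.
have [_ cA _] := P_spec v.
have eAp : A = p by apply/eqP; rewrite eqEcard Ap p2 cA; lia.
by rewrite -eAp subxx; apply/negbTE/setU1_part_notin_H; rewrite eAp.
Qed.

Lemma mem_H_crosses e : #|e| = 3 -> (e \in H) = crosses (v |: A) e.
Proof.
move=> e3; have [vA _ linkv] := P_spec v.
have [ve | vNe] := boolP (v \in e); last by rewrite crosses_setU1_notin // linkv.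
have vNe' : v \notin e :\ v by rewrite setD11.
have e2 : #|e :\ v| = 2 by have := cardsD1 v e; rewrite ve e3 /=; lia.
by rewrite -(setD1K ve) crosses_setU1 // mem_H_setU1.
Qed.

End Reconstruction.

Theorem lemma2p5 (n : nat) (H : {set {set 'I_n}}) :
  6 <= n -> ~~ odd n -> uniform3 H ->
  (forall v : 'I_n, hiso (hdel H v) (B n.-1)) ->
  hiso H (B n).
Proof.
move=> n_ge6 n_even H3 Hdel; set k := n./2.
have n_eq : n = k.*2 by rewrite -{1}(odd_double_half n) (negbTE n_even).
have half_n1 : (n.-1)./2 = k.-1.
  have -> : n.-1 = (k.-1).*2.+1 by rewrite -!addnn in n_eq *; lia.
  exact: uphalf_double.
have /fin_all_exists [P P_spec] := fun w => crossing_part_of_hdel (Hdel w).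
have P_spec' w : [/\ w \notin P w, #|P w| = k.-1 &
    forall e : {set 'I_n}, w \notin e -> #|e| = 3 -> (e \in H) = crosses (P w) e].
  by have [wP cP linkP] := P_spec w; rewrite card_B_X half_n1 in cP.
have card_T : #|'I_n| = k.*2 by rewrite card_ord.
have k_gt2 : 2 < k by lia.
have v : 'I_n by exists 0; lia.
have H_eq : H = crossing_triples (v |: P v).
  apply/setP => e; rewrite mem_crossing_triples.
  have [e3 | e_n3] := eqVneq #|e| 3; first exact: mem_H_crosses card_T k_gt2 P_spec' v _ e3.
  by apply/negP => /H3 /eqP; apply/negP.
rewrite H_eq B_crossing; apply: hiso_crossing_triples.
by rewrite card_B_X (card_setU1_part k_gt2 P_spec').
Qed.
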